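(* Let $K,T\subset\mathbb{R}^n$ be convex bodies and let $q=(q_1,\dots,q_m)$ be a closed $(K,T)$-Minkowski billiard trajectory with closed dual billiard trajectory $p=(p_1,\dots,p_m)$. Then $\{q_1,\dots,q_m\}\in F(K)$ and $\{p_1,\dots,p_m\}\in F(T)$.
   Context: A convex body is a compact convex set in $\mathbb{R}^n$ containing the origin in its interior. For a convex body $K$, $F(K)$ denotes the set of subsets of $\mathbb{R}^n$ which cannot be translated into the interior $\mathring K$ of $K$ (i.e., $A\in F(K)$ iff $A+x\not\subseteq\mathring K$ for all $x\in\mathbb{R}^n$). For a convex set $C$ and $z\in\partial C$, $N_C(z)=\{v:\langle v,y-z\rangle\le 0\ \forall y\in C\}$. A closed polygonal curve $(q_1,\dots,q_m)$, $m\ge2$, always satisfies $q_j\ne q_{j+1}$ and $q_j\notin[q_{j-1},q_{j+1}]$ (indices mod $m$). A closed polygonal curve $q$ with vertices on $\partial K$ is a closed $(K,T)$-Minkowski billiard trajectory if there are $p_1,\dots,p_m\in\partial T$ with $q_{j+1}-q_j\in N_T(p_j)$ and $p_{j+1}-p_j\in -N_K(q_{j+1})$ for all $j$; $p=(p_1,\dots,p_m)$ is a closed dual billiard trajectory in $T$. *)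

From mathcomp Require Import all_boot all_order all_algebra.
From mathcomp Require Import all_classical all_reals all_analysis.
Import Order.TTheory GRing.Theory Num.Theory.
Import numFieldNormedType.Exports.
Local Open Scope classical_set_scope.
Local Open Scope ring_scope.

Section Defs.
Context {R : realType} {n : nat}.
Notation V := 'rV[R]_n.

Definition dotp (u v : V) : R := \sum_(i < n) u ord0 i * v ord0 i.

Definition convex_body (K : set V) : Prop :=
  [/\ compact K, convex_set (K : set (convex_lmodType V)) & interior K 0].

Definition bd (C : set V) : set V := closure C `\` interior C.

Definition Fset (K : set V) : set (set V) :=
  [set A | forall x : V, ~ ([set a + x | a in A] `<=` interior K)].

Definition normal_cone (C : set V) (z : V) : set V :=
  [set v | forall y, C y -> dotp v (y - z) <= 0].

Definition segment (a b : V) : set V :=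
  [set (1 - t) *: a + t *: b | t in `[0, 1]%classic].

Definition closed_polygonal_curve {m : nat} (q : 'I_m -> V) : Prop :=
  (2 <= m)%N /\
  forall j : 'I_m, q j <> q (ordS j) /\ ~ segment (q (ord_pred j)) (q (ordS j)) (q j).

Definition minkowski_billiard (K T : set V) {m : nat} (q p : 'I_m -> V) : Prop :=
  [/\ closed_polygonal_curve q,
      forall j, bd K (q j),
      forall j, bd T (p j),
      forall j, normal_cone T (p j) (q (ordS j) - q j)
    & forall j, normal_cone K (q (ordS j)) (- (p (ordS j) - p j))].

End Defs.

(* Pair the billiard conditions with the translation: if every q_j + x lay in
   the interior of K, then each normal -(p_(j+1) - p_j) of K at q_(j+1) would
   pair non-positively with x, and strictly negatively whenever it is nonzero.
   The normals telescope to 0, so their pairings with x sum to 0, forcing all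
   of them to vanish, i.e. p to be constant.  The same argument for T, whose
   normals q_(j+1) - q_j at p_j are all nonzero, shows that no translate of p
   lies in the interior of T; a constant p would be such a translate of the
   origin, which is interior to T. *)

From mathcomp Require Import all_boot all_order all_algebra.
From mathcomp Require Import all_classical all_reals all_analysis.
From mathcomp Require Import ring lra.
Import Order.TTheory GRing.Theory Num.Theory.
Import numFieldNormedType.Exports.
Local Open Scope classical_set_scope.
Local Open Scope ring_scope.

Lemma telescope_ordS {M : zmodType} {m : nat} (g : 'I_m -> M) :
  \sum_(j < m) (g (ordS j) - g j) = 0.
Proof. by rewrite sumrB [X in _ - X](reindex_inj (@ordS_inj m)) subrr. Qed.

Lemma ordS_invariant_const (A : Type) (m : nat) (f : 'I_m -> A) :
  (forall j, f (ordS j) = f j) -> forall i j, f i = f j.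
Proof.
case: m f => [f _ [] //|m f fS i j].
suff f_ord0 : forall k : 'I_m.+1, f k = f ord0 by rewrite !f_ord0.
case=> k; elim: k => [|k IHk] ltk; first by congr f; apply: val_inj.
rewrite -(IHk (ltnW ltk)) -[RHS]fS; congr f; apply: val_inj.
by rewrite /= modn_small.
Qed.

Section Euclidean.
Context {R : realType} {n : nat}.
Notation V := 'rV[R]_n.

Lemma dotp0l (x : V) : dotp 0 x = 0.
Proof. by rewrite /dotp big1 // => i _; rewrite mxE mul0r. Qed.

Lemma dotpDl (u v x : V) : dotp (u + v) x = dotp u x + dotp v x.
Proof. by rewrite /dotp -big_split; apply: eq_bigr => i _; rewrite mxE mulrDl. Qed.

Lemma dotpDr (u a b : V) : dotp u (a + b) = dotp u a + dotp u b.
Proof. by rewrite /dotp -big_split; apply: eq_bigr => i _; rewrite mxE mulrDr. Qed.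

Lemma dotpZr (u a : V) (t : R) : dotp u (t *: a) = t * dotp u a.
Proof. by rewrite /dotp mulr_sumr; apply: eq_bigr => i _; rewrite mxE mulrCA. Qed.

Lemma dotp_suml (I : Type) (r : seq I) (P : pred I) (v : I -> V) (x : V) :
  dotp (\sum_(i <- r | P i) v i) x = \sum_(i <- r | P i) dotp (v i) x.
Proof. exact: (big_morph (dotp^~ x) (fun u w => dotpDl u w x) (dotp0l x)). Qed.

Lemma dotpp_gt0 (v : V) : v != 0 -> 0 < dotp v v.
Proof.
move=> v0; have [i vi0] : exists i, v ord0 i != 0.
  apply/not_existsP => vi0; move/eqP: v0; apply; apply/rowP => i.
  by rewrite mxE; apply/eqP/negPn/negP/vi0.
rewrite /dotp (bigD1 i) //= ltr_pwDl -?expr2 ?exprn_even_gt0 //.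
by apply: sumr_ge0 => j _; rewrite -expr2 sqr_ge0.
Qed.

(* Moving from y a little along v stays in C, so a nonzero normal at z cannot
   be orthogonal to y - z. *)
Lemma normal_cone_interior_lt0 (C : set V) (z v y : V) :
  normal_cone C z v -> interior C y -> v != 0 -> dotp v (y - z) < 0.
Proof.
move=> Nv /nbhs_ex [d Cd] v0.
have nv : 0 < `|v| by rewrite normr_gt0.
set t := d%:num / (`|v| * 2).
have t0 : 0 < t by rewrite divr_gt0 // mulr_gt0.
have Cyv : C (y + t *: v).
  apply: Cd; rewrite mx_norm_ball /ball_ /= opprD addrA subrr add0r normrN normrZ.
  have -> : `|t| * `|v| = d%:num / 2 by rewrite gtr0_norm // /t; field; rewrite gt_eqF.
  by rewrite ltr_pdivrMr // ltr_pMr // ltr1n.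
have := Nv _ Cyv; rewrite addrAC [dotp v (_ + _ *: v)]dotpDr dotpZr.
have := mulr_gt0 t0 (dotpp_gt0 v v0); lra.
Qed.

Lemma Fset_range (C : set V) (m : nat) (a : 'I_m -> V) :
  (forall x, ~ forall j, interior C (a j + x)) -> Fset C (range a).
Proof.
by move=> aC x sub; apply: (aC x) => j; apply: sub; exists (a j) => //; exists j.
Qed.

Lemma normals_sum0_not_interior {C : set V} {m : nat} {a v : 'I_m -> V} {x : V} :
  (forall j, normal_cone C (a j) (v j)) -> \sum_(j < m) v j = 0 ->
  (exists j, v j != 0) -> ~ forall j, interior C (a j + x).
Proof.
move=> Nv sum_v0 [j0 vj0] int_ax.
have pair_x j : dotp (v j) x = dotp (v j) ((a j + x) - a j).
  by rewrite addrAC subrr add0r.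
have le0 j : dotp (v j) x <= 0.
  by rewrite pair_x; apply: Nv; apply: interior_subset; apply: int_ax.
have lt0 : dotp (v j0) x < 0.
  by rewrite pair_x; apply: normal_cone_interior_lt0 (Nv j0) (int_ax j0) vj0.
have sum0 : \sum_(j < m) dotp (v j) x = 0 by rewrite -dotp_suml sum_v0 dotp0l.
have : \sum_(j < m | j != j0) dotp (v j) x <= 0 by apply: sumr_le0.
move: sum0; rewrite (bigD1 j0) //=; lra.
Qed.

End Euclidean.

Theorem proposition3p9 (R : realType) (n : nat) (K T : set 'rV[R]_n)
    (m : nat) (q p : 'I_m -> 'rV[R]_n) :
  convex_body K -> convex_body T -> minkowski_billiard K T q p ->
  Fset K (range q) /\ Fset T (range p).
Proof.
move=> [_ _ K0] [_ _ T0] [[m2 cq] _ _ NT NK].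
have j0 : 'I_m := Ordinal (leq_trans (isT : 0 < 2)%N m2).
have p_untranslatable x : ~ forall j, interior T (p j + x).
  apply: normals_sum0_not_interior NT (telescope_ordS q) _.
  by exists j0; rewrite subr_eq0; apply/eqP/nesym; case: (cq j0).
have p_nonconst : exists j, - (p (ordS j) - p j) != 0.
  apply: contrapT => p_const; apply: (p_untranslatable (- p j0)) => j.
  suff -> : p j = p j0 by rewrite subrr.
  apply: ordS_invariant_const => i; apply/eqP; rewrite -subr_eq0 -oppr_eq0.
  by apply/negPn/negP => pi_step; apply: p_const; exists i.
have sum_dual_steps : \sum_(j < m) - (p (ordS j) - p j) = 0.
  by rewrite sumrN telescope_ordS oppr0.
split; apply: Fset_range => // x int_qx.
exact: normals_sum0_not_interior NK sum_dual_steps p_nonconst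
  (fun j => int_qx (ordS j)).
Qed.
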